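(* Let $p\ne5$ be an odd prime. Then $$\sum_{k=1}^{[\frac{p+1}4]}\binom{4k-2}{2k-1}\frac1{20^k}\equiv\begin{cases}0\pmod p&\text{if }p\equiv\pm1\pmod5,\\ \mp(-1)^{\frac{p-1}2}\frac12\pmod p&\text{if }p\equiv\pm2\pmod5.\end{cases}$$
   Context: $[x]$ is the greatest integer $\le x$. *)

(* Congruences mod a prime p are stated as equalities in 'F_p. *)
From HB Require Import structures.
From mathcomp Require Import all_boot all_order all_algebra.
Set Implicit Arguments. Unset Strict Implicit. Unset Printing Implicit Defensive.
Import Order.TTheory GRing.Theory Num.Theory.

From HB Require Import structures.
From mathcomp Require Import all_boot all_order all_algebra.
From mathcomp Require Import all_fingroup all_solvable all_field zify ring.
Set Implicit Arguments. Unset Strict Implicit. Unset Printing Implicit Defensive.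
Import GRing.Theory.
Local Open Scope ring_scope.

(* Let p <> 5 be an odd prime, n = (p - 1) / 2 and
     S = \sum_(1 <= k <= (p + 1) / 4) C(4k - 2, 2k - 1) / 20 ^ k   (mod p).
   1. Since p = 2n + 1, C(2m, m) = C(n, m) (-4) ^ m mod p, hence
      S = -1/5 * \sum_j C(n, 2j + 1) (4/5) ^ j, and by the binomial theorem
      S = - ((1 + 2/g) ^ n - (1 - 2/g) ^ n) g / 20  whenever g ^ 2 = 5.
   2. We move to a field of characteristic p containing a primitive 20th root
      of unity z (one exists in the field with p ^ 4 elements, as
      20 | p ^ 4 - 1).  The numbers c_k = z ^ k + z ^ -k satisfy
      c_2 ^ 2 = c_2 + 1, so g = 2 c_2 - 1 is a square root of 5, and
      1 + 2/g = (c_2 ^ 2 / c_1) ^ 2,  1 - 2/g = (c_6 ^ 2 / c_3) ^ 2.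
      For such squares u ^ 2 we have (u ^ 2) ^ n = u ^ p / u.
   3. The Frobenius map x |-> x ^ p sends c_k to c_(kp), which only depends on
      p mod 20 and equals +- c_j for j in {1, 2, 3, 6}.  When p = +-1 (mod 5)
      it fixes c_2, c_6 and scales c_1, c_3 by a common sign, so S = 0; when
      p = +-2 (mod 5) it exchanges c_2 and c_6, and c_1 and c_3 up to sign,
      which gives S = +-1/2, the sign being read off p mod 4.
   4. 'F_p embeds in that field, which transfers the three identities. *)

(* A prime to 10 has a fourth power congruent to 1 mod 20; hence the field
   with p ^ 4 elements contains the 20th roots of unity. *)
Lemma dvdn_pow4_sub1 (p : nat) : odd p -> ~~ (5 %| p)%N -> (20 %| p ^ 4 - 1)%N.
Proof.
move=> p_odd p_ndvd5; have p_gt0 : (0 < p)%N by case: p p_odd {p_ndvd5}.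
rewrite -eqn_mod_dvd ?expn_gt0 ?p_gt0 // -modnXm.
have : odd (p %% 20) by rewrite odd_mod.
have : (p %% 20 %% 5 != 0)%N by rewrite (modn_dvdm p (isT : (5 %| 20)%N)).
move: (ltn_mod p 20); move: (p %% 20)%N => r.
by do 20! case: r => [|r] //.
Qed.

Lemma odd_half_double (p : nat) : odd p -> p = ((p - 1) %/ 2).*2.+1.
Proof.
move=> p_odd; have : (p %% 2 = 1)%N by rewrite modn2 p_odd.
by lia.
Qed.

Lemma mod20_residues (p a : nat) : odd p -> (p %% 5 = a)%N ->
  (p %% 20 \in [seq r <- iota 0 20 | odd r && (r %% 5 == a)])%N.
Proof.
move=> p_odd p_a; rewrite mem_filter mem_iota ltn_mod odd_mod //.
by rewrite (modn_dvdm p (isT : (5 %| 20)%N)) p_a p_odd eqxx.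
Qed.

Lemma sign_half {R : pzRingType} (p : nat) : odd p ->
  (-1) ^+ ((p - 1) %/ 2) = (-1) ^+ (p %% 4 == 3)%N :> R.
Proof.
move=> p_odd; rewrite -signr_odd; congr (_ ^+ _).
have : (p %% 2 = 1)%N by rewrite modn2 p_odd.
by rewrite -modn2; case: eqP => /=; lia.
Qed.

Lemma finField_prim_root (F : finFieldType) : exists z : F, #|F|.-1.-primitive_root z.
Proof.
pose rs := enum (predC1 (0 : F)).
have unity_rs x : x \in rs -> #|F|.-1.-unity_root x.
  rewrite mem_enum => /= x_nz; apply/unity_rootP; apply: (mulIf x_nz).
  by rewrite mul1r -exprSr prednK ?expf_card // (cardD1 0).
have /hasP [z _ prim_z] : has #|F|.-1.-primitive_root rs.
  apply: has_prim_root; rewrite ?enum_uniq //.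
  - by rewrite -(cardC1 0); apply/card_gt0P; exists 1; rewrite !inE oner_eq0.
  - exact/allP.
  - by rewrite -cardE cardC1.
by exists z.
Qed.

Lemma prim_root_char (p k d : nat) : prime p -> (0 < k)%N -> (d %| p ^ k - 1)%N ->
  exists (F : fieldType) (_ : p \in [pchar F]) (z : F), d.-primitive_root z.
Proof.
move=> p_pr k_gt0 d_dvd.
case: (pPrimePowerField p_pr k_gt0) => F pcharF cardF.
have [z prim_z] := finField_prim_root F.
exists F, pcharF, (z ^+ (#|F|.-1 %/ d)).
have d_dvdF : (d %| #|F|.-1)%N by rewrite cardF -subn1.
exact: (dvdn_prim_root prim_z d_dvdF).
Qed.

Lemma central_binom_succ m :
  (m.+1 * 'C(m.+1.*2, m.+1) = 2 * m.*2.+1 * 'C(m.*2, m))%N.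
Proof.
have up : (m.+1 * 'C(m.+1.*2, m.+1) = m.+1.*2 * 'C(m.*2.+1, m))%N.
  by rewrite -mul_bin_diag doubleS.
have down : (m.*2.+1 * 'C(m.*2, m) = m.+1 * 'C(m.*2.+1, m))%N.
  by rewrite mul_bin_down -addnn subSn ?leq_addr // addnK.
apply/eqP; rewrite -(eqn_pmul2l (ltn0Sn m)) up mulnCA -down; apply/eqP; lia.
Qed.

Lemma sum_nat_pairs (V : nmodType) (f : nat -> V) (M : nat) :
  \sum_(0 <= i < M.*2) f i = \sum_(0 <= j < M) (f j.*2 + f j.*2.+1).
Proof.
elim: M => [|M IHM]; first by rewrite !big_geq.
by rewrite doubleS !big_nat_recr //= IHM addrA.
Qed.

Lemma sub_binomials (R : comNzRingType) (c : R) (N : nat) :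
  (1 + c) ^+ N - (1 - c) ^+ N =
  2%:R * c * \sum_(j < N.+1) 'C(N, j.*2.+1)%:R * (c ^+ 2) ^+ j.
Proof.
rewrite !(addrC 1) !exprD1n -sumrB big_distrr /=.
pose h i := (c ^+ i - (- c) ^+ i) *+ 'C(N, i).
have ->: \sum_(i < N.+1) (c ^+ i *+ 'C(N, i) - (- c) ^+ i *+ 'C(N, i))
    = \sum_(0 <= i < N.+1.*2) h i.
  rewrite (@big_cat_nat _ _ _ N.+1) //=; last by rewrite -addnn leq_addr.
  rewrite [X in _ = _ + X]big1_seq ?addr0; last first.
    move=> i /andP [_]; rewrite mem_index_iota => /andP [lt_Ni _].
    by rewrite /h bin_small ?mulr0n.
  by rewrite big_mkord; apply: eq_bigr => i _; rewrite /h mulrnBl.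
rewrite sum_nat_pairs big_mkord; apply: eq_bigr => j _.
rewrite /h -!muln2 [(j * 2)%N]mulnC exprS [(- c) ^+ _.+1]exprS !exprM sqrrN.
by rewrite subrr mul0rn add0r -mulr_natr; ring.
Qed.

Definition bin_sum (F : fieldType) (p : nat) : F :=
  \sum_(1 <= k < ((p + 1) %/ 4).+1) 'C(4 * k - 2, 2 * k - 1)%:R / 20%:R ^+ k.

Lemma natf_neq0 (F : fieldType) (p k : nat) :
  p \in [pchar F] -> (0 < k < p)%N -> k%:R != 0 :> F.
Proof.
move=> pcharF /andP [k_gt0 lt_kp]; rewrite -(dvdn_pcharf pcharF).
by apply: contraTN lt_kp => /(dvdn_leq k_gt0); rewrite leqNgt.
Qed.

Lemma sqr_exp_half (F : fieldType) (p : nat) (b : F) : odd p -> b != 0 ->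
  (b ^+ 2) ^+ ((p - 1) %/ 2) = b ^+ p / b.
Proof.
move=> p_odd b_neq0.
by rewrite -exprM mul2n {2}(odd_half_double p_odd) exprSr mulfK.
Qed.

Section BinomialModP.
Variables (F : fieldType) (p : nat).
Hypotheses (pcharF : p \in [pchar F]) (p_odd : odd p).
Local Notation n := ((p - 1) %/ 2)%N.
Let p_eq : p = n.*2.+1 := odd_half_double p_odd.

Lemma two_neq0 : 2%:R != 0 :> F.
Proof.
apply: (natf_neq0 pcharF); have := prime_gt1 (pcharf_prime pcharF).
by rewrite [p]p_eq; lia.
Qed.

Lemma twenty_neq0 : 5%:R != 0 :> F -> 20%:R != 0 :> F.
Proof. by move=> five_neq0; rewrite (natrM F 4 5) (natrM F 2 2) !mulf_neq0 ?two_neq0. Qed.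

(* C(2m, m) = C(-1/2, m) (-4) ^ m, and n = -1/2 in characteristic p. *)
Lemma central_binom m :
  (m <= n)%N -> 'C(m.*2, m)%:R = 'C(n, m)%:R * (- 4%:R) ^+ m :> F.
Proof.
elim: m => [|m IHm] lt_mn; first by rewrite !bin0 expr0 mulr1.
have m1_neq0 : m.+1%:R != 0 :> F by apply: (natf_neq0 pcharF); rewrite [p]p_eq; lia.
have twice_odd : (2 * m.*2.+1)%:R = - (4 * (n - m))%:R :> F.
  apply/eqP; rewrite -addr_eq0 -natrD (_ : (_ + _)%N = 2 * p)%N.
    by rewrite natrM (pcharf0 pcharF) mulr0.
  by rewrite [p in RHS]p_eq; lia.
apply: (mulfI m1_neq0).
rewrite -natrM central_binom_succ natrM twice_odd IHm 1?ltnW //.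
by rewrite [RHS]mulrA -[in RHS]natrM mul_bin_left !natrM exprS; ring.
Qed.

(* The terms with index k > (p + 1) / 4 vanish anyway, since then 2k - 1 > n. *)
Lemma bin_sum_odd_part : 5%:R != 0 :> F ->
  bin_sum F p = - 5%:R^-1 * \sum_(j < n.+1) 'C(n, j.*2.+1)%:R * (4%:R / 5%:R) ^+ j.
Proof.
move=> five_neq0; set K := ((p + 1) %/ 4)%N.
have [lt_nK le_Kn] : (n < K.*2.+1 /\ K <= n.+1)%N by rewrite /K; have := p_eq; lia.
rewrite /bin_sum -/K big_add1 /= big_mkord.
rewrite -(big_mkord xpredT (fun j => 'C(n, j.*2.+1)%:R * (4%:R / 5%:R) ^+ j)).
rewrite (big_cat_nat (leq0n K) le_Kn) /= [X in _ + X]big1_seq ?addr0; last first.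
  move=> i /andP [_]; rewrite mem_index_iota => /andP [le_Ki _].
  by rewrite bin_small ?mul0r //; lia.
rewrite big_mkord mulr_sumr; apply: eq_bigr => [[i lt_iK]] _ /=.
rewrite (_ : 4 * i.+1 - 2 = i.*2.+1.*2)%N; last by lia.
rewrite (_ : 2 * i.+1 - 1 = i.*2.+1)%N; last by lia.
rewrite central_binom; last by lia.
rewrite exprS -mul2n exprM sqrrN exprAC [in X in _ / X]exprS (natrM F 4 5) exprMn.
rewrite expr_div_n -(natrM F 4 5).
have four_neq0 : 4%:R != 0 :> F by rewrite (natrM F 2 2) mulf_neq0 ?two_neq0.
have := expf_neq0 i five_neq0; have := expf_neq0 i four_neq0.
move: (4%:R ^+ i) (5%:R ^+ i) => a b a_neq0 b_neq0.
by field; rewrite a_neq0 b_neq0 five_neq0 (twenty_neq0 five_neq0).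
Qed.

Lemma bin_sum_sqrt5 (g : F) : 5%:R != 0 :> F -> g ^+ 2 = 5%:R ->
  bin_sum F p = - ((1 + 2%:R / g) ^+ n - (1 - 2%:R / g) ^+ n) * g / 20%:R.
Proof.
move=> five_neq0 g2.
have g_neq0 : g != 0 by apply: contraNneq five_neq0 => g0; rewrite -g2 g0 expr0n.
rewrite sub_binomials expr_div_n g2 expr2 -natrM (bin_sum_odd_part five_neq0).
move: (\sum_(j < n.+1) _) => T.
by field; rewrite g_neq0 five_neq0 (twenty_neq0 five_neq0).
Qed.

End BinomialModP.

Definition cyc {F : fieldType} (z : F) (k : nat) : F := z ^+ k + (z ^+ k)^-1.

Section Cyclotomic20.
Variables (F : fieldType) (z : F).
Hypothesis prim_z : 20.-primitive_root z.
Local Notation cyc := (cyc z).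

Lemma z_neq0 : z != 0.
Proof. by rewrite (prim_root_eq0 prim_z). Qed.

Lemma z_pow10 : z ^+ 10 = -1.
Proof.
have : (z ^+ 10) ^+ 2 == 1 by rewrite -exprM (prim_expr_order prim_z).
by rewrite sqrf_eq1 -(prim_order_dvd prim_z) => /orP [|/eqP].
Qed.

(* z is a root of the 20th cyclotomic polynomial, used as a rewrite rule. *)
Lemma cyclotomic20 : z ^+ 8 = z ^+ 6 - z ^+ 4 + z ^+ 2 - 1.
Proof.
have z2_neq : z ^+ 2 + 1 != 0.
  rewrite addr_eq0; apply/negP => /eqP z2.
  suff : (20 %| 4)%N by [].
  by rewrite (prim_order_dvd prim_z) (exprM z 2 2) z2 sqrrN expr1n.
apply/eqP; rewrite -subr_eq0; apply/eqP/(mulfI z2_neq).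
transitivity (z ^+ 10 + 1); first by ring.
by rewrite z_pow10 addNr mulr0.
Qed.

Lemma cyc_congr m j (s : bool) :
  (m == j + s * 10 %[mod 20])%N || (m + j == s * 10 %[mod 20])%N ->
  cyc m = (-1) ^+ s * cyc j.
Proof.
have sgn : z ^+ (s * 10) = (-1) ^+ s by rewrite mulnC exprM z_pow10.
have zj_neq0 : z ^+ j != 0 by rewrite expf_neq0 ?z_neq0.
case/orP; rewrite -(eq_prim_root_expr prim_z) ?exprD sgn => /eqP zm.
  by rewrite /cyc zm invfM invr_sign; ring.
have zmE : z ^+ m = (-1) ^+ s / z ^+ j by rewrite -zm mulfK.
by rewrite /cyc zmE invfM invrK invr_sign; ring.
Qed.

Lemma cyc_neq0 k : (k.*2 != 10 %[mod 20])%N -> cyc k != 0.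
Proof.
apply: contraNN => /eqP cyc0; rewrite -(eq_prim_root_expr prim_z) z_pow10.
have zk_neq0 : z ^+ k != 0 by rewrite expf_neq0 ?z_neq0.
have : z ^+ k * cyc k = z ^+ k.*2 + 1 by rewrite /cyc mulrDr mulfV // -addnn exprD.
by rewrite cyc0 mulr0 => /esym/eqP; rewrite addr_eq0.
Qed.

(* Since z ^ 10 = -1, c_k is a polynomial in z for k <= 10. *)
Lemma cyc_low k j : (k + j = 10)%N -> cyc k = z ^+ k - z ^+ j.
Proof.
move=> kj10; rewrite /cyc; congr (_ + _); apply: (mulIf (expf_neq0 k z_neq0)).
by rewrite mulVf ?expf_neq0 ?z_neq0 // mulNr -exprD addnC kj10 z_pow10 opprK.
Qed.

Lemma cyc2_sqr : cyc 2 ^+ 2 = cyc 2 + 1.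
Proof. by rewrite (@cyc_low 2 8) //; ring: cyclotomic20. Qed.

Lemma cyc6E : cyc 6 = 1 - cyc 2.
Proof. by rewrite (@cyc_low 6 4) // (@cyc_low 2 8) //; ring: cyclotomic20. Qed.

Lemma cyc1_sqr : cyc 1 ^+ 2 = 2%:R + cyc 2.
Proof. by rewrite (@cyc_low 1 9) // (@cyc_low 2 8) //; ring: cyclotomic20. Qed.

Lemma cyc3_sqr : cyc 3 ^+ 2 = 3%:R - cyc 2.
Proof. by rewrite (@cyc_low 3 7) // (@cyc_low 2 8) //; ring: cyclotomic20. Qed.

Lemma cyc1_cyc3 : cyc 1 * cyc 3 = 2%:R * cyc 2 - 1.
Proof.
by rewrite (@cyc_low 1 9) // (@cyc_low 3 7) // (@cyc_low 2 8) //; ring: cyclotomic20.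
Qed.

Lemma sqrt5_sqr : (2%:R * cyc 2 - 1) ^+ 2 = 5%:R.
Proof. by ring: cyc2_sqr. Qed.

Lemma sqrt5_neq0 : 2%:R * cyc 2 - 1 != 0.
Proof. by rewrite -cyc1_cyc3 mulf_neq0 ?cyc_neq0. Qed.

End Cyclotomic20.

Section Frobenius.
Variables (F : fieldType) (p : nat) (z : F).
Hypotheses (pcharF : p \in [pchar F]) (p_odd : odd p) (prim_z : 20.-primitive_root z).
Local Notation cyc := (cyc z).
Local Notation n := ((p - 1) %/ 2)%N.
Local Notation sqrt5 := (2%:R * cyc 2 - 1).

Let two_nz : 2%:R != 0 :> F := prim_root_dvd_eq0 prim_z (isT : (2 %| 20)%N).
Let five_nz : 5%:R != 0 :> F := prim_root_dvd_eq0 prim_z (isT : (5 %| 20)%N).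
Let twenty_nz : 20%:R != 0 :> F := prim_root_dvd_eq0 prim_z (dvdnn 20).
Let cyc_nz k : (k.*2 != 10 %[mod 20])%N -> cyc k != 0 := @cyc_neq0 _ _ prim_z k.

Lemma cyc_frob k : cyc k ^+ p = cyc (k * p).
Proof.
rewrite -(pFrobenius_autE pcharF) pFrobenius_autD_comm; last exact: mulrC.
by rewrite !(pFrobenius_autE pcharF) exprVn -exprM.
Qed.

Lemma cyc_frob_signed r k j (s : bool) : (p %% 20 = r)%N ->
  (k * r == j + s * 10 %[mod 20])%N || (k * r + j == s * 10 %[mod 20])%N ->
  cyc k ^+ p = (-1) ^+ s * cyc j.
Proof.
move=> p_r congr_r; rewrite cyc_frob; apply: (cyc_congr prim_z).
have kp : (k * p = k * r %[mod 20])%N by rewrite -p_r modnMmr.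
by rewrite -(modnDml (k * p) j) kp modnDml.
Qed.

Lemma cyc_frob_unsigned r k j : (p %% 20 = r)%N ->
  (k * r == j %[mod 20])%N || (k * r + j == 0 %[mod 20])%N -> cyc k ^+ p = cyc j.
Proof. by move=> p_r congr_r; rewrite (@cyc_frob_signed r k j false) ?mul1r ?addn0. Qed.

(* Both powers in bin_sum_sqrt5 are quotients u ^ p / u of Frobenius images. *)
Lemma bin_sum_frobenius :
  bin_sum F p =
  - ((cyc 2 ^+ p) ^+ 2 / cyc 1 ^+ p * (cyc 1 / cyc 2 ^+ 2)
     - (cyc 6 ^+ p) ^+ 2 / cyc 3 ^+ p * (cyc 3 / cyc 6 ^+ 2)) * sqrt5 / 20%:R.
Proof.
have [c1 c2 c3 c6] : [/\ cyc 1 != 0, cyc 2 != 0, cyc 3 != 0 & cyc 6 != 0].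
  by split; apply: cyc_nz.
have h2 := cyc2_sqr prim_z; have h1 := cyc1_sqr prim_z; have h3 := cyc3_sqr prim_z.
have plus : 1 + 2%:R / sqrt5 = (cyc 2 ^+ 2 / cyc 1) ^+ 2.
  by field: h2 h1; rewrite (sqrt5_neq0 prim_z) c1.
have minus : 1 - 2%:R / sqrt5 = (cyc 6 ^+ 2 / cyc 3) ^+ 2.
  by rewrite (cyc6E prim_z); field: h2 h3; rewrite (sqrt5_neq0 prim_z) c3.
rewrite (bin_sum_sqrt5 pcharF p_odd five_nz (sqrt5_sqr prim_z)) plus minus.
rewrite !(sqr_exp_half p_odd) ?mulf_neq0 ?expf_neq0 ?invr_eq0 //.
by rewrite !expr_div_n (exprAC (cyc 2)) (exprAC (cyc 6)) !invf_div.
Qed.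

(* When 5 is a square mod p, Frobenius fixes c_2 = (1 + sqrt 5) / 2. *)
Lemma bin_sum_fixed (s : bool) :
  cyc 2 ^+ p = cyc 2 -> cyc 6 ^+ p = cyc 6 ->
  cyc 1 ^+ p = (-1) ^+ s * cyc 1 -> cyc 3 ^+ p = (-1) ^+ s * cyc 3 ->
  bin_sum F p = 0.
Proof.
move=> frob2 frob6 frob1 frob3.
rewrite bin_sum_frobenius {}frob2 {}frob6 {}frob1 {}frob3.
have [c1 c2 c3 c6] : [/\ cyc 1 != 0, cyc 2 != 0, cyc 3 != 0 & cyc 6 != 0].
  by split; apply: cyc_nz.
by field; rewrite twenty_nz c1 c2 c3 c6 signr_eq0.
Qed.

(* Otherwise Frobenius exchanges c_2 and c_6 = (1 - sqrt 5) / 2. *)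
Lemma bin_sum_swapped (s : bool) :
  cyc 2 ^+ p = cyc 6 -> cyc 6 ^+ p = cyc 2 ->
  cyc 1 ^+ p = (-1) ^+ (~~ s) * cyc 3 -> cyc 3 ^+ p = (-1) ^+ s * cyc 1 ->
  bin_sum F p = (-1) ^+ s / 2%:R.
Proof.
move=> frob2 frob6 frob1 frob3.
rewrite bin_sum_frobenius {}frob2 {}frob6 {}frob1 {}frob3.
have [c1 c2] : cyc 1 != 0 /\ cyc 2 != 0 by split; apply: cyc_nz.
have c6 : 1 - cyc 2 != 0 by rewrite -(cyc6E prim_z) cyc_nz.
have c3E : cyc 3 = sqrt5 / cyc 1.
  by rewrite -(cyc1_cyc3 prim_z) [cyc 1 * _]mulrC mulfK.
have h2 := cyc2_sqr prim_z; have h1 := cyc1_sqr prim_z.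
rewrite (cyc6E prim_z) c3E.
by case: s; field: h2 h1;
  rewrite ?two_nz ?twenty_nz ?c6 ?c1 ?c2 ?(sqrt5_neq0 prim_z) ?oppr_eq0 ?oner_eq0.
Qed.

Local Ltac frobenius_image p20 :=
  first [ by apply: (cyc_frob_unsigned p20) | by apply: (cyc_frob_signed p20) ].

Lemma bin_sum_mod5_square : (p %% 5 == 1)%N || (p %% 5 == 4)%N -> bin_sum F p = 0.
Proof.
case/orP=> /eqP p5; have := mod20_residues p_odd p5; rewrite !inE;
  case/orP=> /eqP p20; apply: (bin_sum_fixed (s := ((p %% 20 == 9) || (p %% 20 == 11))%N));
  rewrite ?p20; frobenius_image p20.
Qed.

Lemma bin_sum_mod5_2 : (p %% 5 == 2)%N -> bin_sum F p = - ((-1) ^+ n / 2%:R).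
Proof.
move=> /eqP p5; rewrite (sign_half p_odd) -mulNr -signrN.
have := mod20_residues p_odd p5; rewrite !inE.
by case/orP=> /eqP p20; rewrite -(modn_dvdm p (isT : (4 %| 20)%N)) p20;
  apply: bin_sum_swapped; frobenius_image p20.
Qed.

Lemma bin_sum_mod5_3 : (p %% 5 == 3)%N -> bin_sum F p = (-1) ^+ n / 2%:R.
Proof.
move=> /eqP p5; rewrite (sign_half p_odd).
have := mod20_residues p_odd p5; rewrite !inE.
by case/orP=> /eqP p20; rewrite -(modn_dvdm p (isT : (4 %| 20)%N)) p20;
  apply: bin_sum_swapped; frobenius_image p20.
Qed.

End Frobenius.

Theorem corollary3p7 (p : nat) (hp : prime p) (hodd : odd p) (h5 : p != 5%N) :
  let S : 'F_p :=
    \sum_(1 <= k < ((p + 1) %/ 4).+1) ('C(4 * k - 2, 2 * k - 1))%:R / (20%:R) ^+ k in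
  ((p %% 5 == 1)%N || (p %% 5 == 4)%N -> S = 0) /\
  ((p %% 5 == 2)%N -> S = - ((-1) ^+ ((p - 1) %/ 2) / 2%:R)) /\
  ((p %% 5 == 3)%N -> S = (-1) ^+ ((p - 1) %/ 2) / 2%:R).
Proof.
move=> S.
have p_ndvd5 : ~~ (5 %| p)%N by rewrite (dvdn_prime2 (isT : prime 5) hp) eq_sym.
have [F [pcharF [z prim_z]]] :=
  prim_root_char hp (isT : (0 < 4)%N) (dvdn_pow4_sub1 hodd p_ndvd5).
pose f : {rmorphism 'F_p -> pPrimeCharType pcharF} := GRing.in_alg _.
have fS : f S = bin_sum _ p.
  by rewrite rmorph_sum; apply: eq_bigr => k _; rewrite fmorph_div rmorphXn !rmorph_nat.
have f_sign e : f ((-1) ^+ e / 2%:R) = (-1) ^+ e / 2%:R.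
  by rewrite fmorph_div rmorphXn rmorphN1 rmorph_nat.
split; [|split] => p_mod5; apply: (fmorph_inj f); rewrite fS ?rmorph0 ?rmorphN ?f_sign.
- exact: (bin_sum_mod5_square pcharF hodd prim_z).
- exact: (bin_sum_mod5_2 pcharF hodd prim_z).
- exact: (bin_sum_mod5_3 pcharF hodd prim_z).
Qed.
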